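(* Let $k\ge 2$ and $\ell\ge 0$ be constants. There is a deterministic $\mathsf{Online}$-$\mathsf{LOCAL}$ algorithm with locality $O(\log n)$ that properly colors every $n$-node connected graph in $\mathcal{L}_{k,\ell}$ using colors from $\{1,\dots,k+1\}$.
   Context: A graph is $k$-partite if it admits a proper coloring with $k$ colors. For a graph $G=(V,E)$, $U\subseteq V$ and an integer $T\ge 0$, $\mathcal{B}(U,T)$ denotes the set of nodes at distance at most $T$ from some node of $U$, and $G[U]$ denotes the induced subgraph. Locally inferable unique colorings: let $G$ be a $k$-partite graph and $\ell\ge0$ an integer. For a connected subgraph $G'=(V',E')$ of $G$, let $\mathcal{C}^*(G',\ell)$ be the set of all proper $k$-colorings (colors $\{1,\dots,k\}$) of $G[\mathcal{B}(V',\ell)]$, and $\mathcal{C}(G',\ell)$ the set of restrictions to $V'$ of colorings in $\mathcal{C}^*(G',\ell)$. Two $k$-colorings $c,c'$ are identical up to a permutation if $c'=\phi\circ c$ for some permutation $\phi$ of $\{1,\dots,k\}$. $\mathcal{L}_{k,\ell}$ is the class of $k$-partite graphs $G$ such that for every connected subgraph $G'$ of $G$, all colorings in $\mathcal{C}(G',\ell)$ are identical up to a permutation. The $\mathsf{Online}$-$\mathsf{LOCAL}$ model: an algorithm with locality $T=T(n)$ is deterministic and knows $n$. The adversary chooses an $n$-node input graph $G=(V,E)$ from the input family, assigns distinct identifiers from $\{1,\dots,\mathrm{poly}(n)\}$ to its nodes, and chooses an ordering $\sigma=(v_1,\dots,v_n)$ of $V$. For $i=1,\dots,n$, when $v_i$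 is presented, the algorithm must irrevocably assign an output (here a color) to $v_i$ as a function of the sequence $(v_1,\dots,v_i)$ and the induced subgraph $G_i=G\big[\bigcup_{j\le i}\mathcal{B}(v_j,T)\big]$ (with identifiers); thus the algorithm has global memory of everything seen so far. The algorithm solves a coloring problem on an input family if for every choice of the adversary the final coloring is proper and uses only the allowed colors. The locality of a problem is the minimum locality of an algorithm solving it. *)

From mathcomp Require Import all_boot all_fingroup.
Set Implicit Arguments. Unset Strict Implicit. Unset Printing Implicit Defensive.

Definition sgraph (V : finType) (e : rel V) : Prop :=
  symmetric e /\ irreflexive e.

Definition connected_graph (V : finType) (e : rel V) : Prop :=
  forall x y : V, connect e x y.

Fixpoint nball (V : finType) (e : rel V) (t : nat) (u : V) : {set V} :=
  match t with
  | 0 => [set u]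
  | t'.+1 => nball e t' u :|: [set y | [exists x in nball e t' u, e x y]]
  end.

Definition ball (V : finType) (e : rel V) (t : nat) (U : {set V}) : {set V} :=
  \bigcup_(u in U) nball e t u.

Definition proper_on (V : finType) (C : eqType) (e : rel V) (U : {set V})
    (c : V -> C) : Prop :=
  forall x y, x \in U -> y \in U -> e x y -> c x != c y.

Definition k_partite (V : finType) (e : rel V) (k : nat) : Prop :=
  exists c : V -> 'I_k, proper_on e [set: V] c.

Definition connected_subgraph (V : finType) (e : rel V) (V' : {set V})
    (E' : rel V) : Prop :=
  [/\ forall x y, E' x y -> [&& x \in V', y \in V' & e x y],
      symmetric E' &
      forall x y, x \in V' -> y \in V' -> connect E' x y].

(* The class L_{k,l} of locally inferable unique colorings.
   Colors {1..k} are represented by 'I_k; a coloring of G[B(V',l)] is any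
   c : V -> 'I_k proper on B(V',l) (values outside are irrelevant). *)
Definition L_class (V : finType) (e : rel V) (k l : nat) : Prop :=
  k_partite e k /\
  forall (V' : {set V}) (E' : rel V), connected_subgraph e V' E' ->
  forall c c' : V -> 'I_k,
    proper_on e (ball e l V') c -> proper_on e (ball e l V') c' ->
    exists phi : {perm 'I_k}, forall x, x \in V' -> c' x = phi (c x).

(* An Online-LOCAL algorithm: given n, the identifiers of the presented
   nodes (v_1, ..., v_i) in order, and the visible induced subgraph
   G_i = G[B({v_1..v_i}, T)] described by its set of identifiers and its
   edge relation on identifiers, it outputs the color of v_i. *)
Definition online_alg := nat -> seq nat -> (nat -> bool) -> (nat -> nat -> bool) -> nat.

Definition online_output (A : online_alg) (T : nat -> nat) (V : finType)
    (e : rel V) (id : V -> nat) (sigma : seq V) (i : nat) : nat :=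
  let n := #|V| in
  let p := take i sigma in
  let W := ball e (T n) [set x in p] in
  A n (map id p)
    (fun a => [exists x in W, id x == a])
    (fun a b => [exists x in W, exists y in W, [&& id x == a, id y == b & e x y]]).

(* color assigned to v, which is presented at step (index v sigma).+1 *)
Definition online_coloring (A : online_alg) (T : nat -> nat) (V : finType)
    (e : rel V) (id : V -> nat) (sigma : seq V) (v : V) : nat :=
  online_output A T e id sigma (index v sigma).+1.

Definition solves_online (A : online_alg) (T : nat -> nat) (k l d : nat) : Prop :=
  forall (V : finType) (e : rel V) (id : V -> nat) (sigma : seq V),
    sgraph e -> connected_graph e -> L_class e k l ->
    injective id -> (forall x, 1 <= id x <= #|V| ^ d) ->
    perm_eq sigma (enum V) ->
    (forall v, 1 <= online_coloring A T e id sigma v <= k.+1) /\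
    (forall u v, e u v ->
       online_coloring A T e id sigma u != online_coloring A T e id sigma v).

Definition is_O_log (T : nat -> nat) : Prop :=
  exists C N : nat, forall n, N <= n -> T n <= C * trunc_log 2 n.

From mathcomp Require Import all_boot all_fingroup zify.
From Stdlib Require Import ClassicalEpsilon PropExtensionality FunctionalExtensionality.
Set Implicit Arguments. Unset Strict Implicit. Unset Printing Implicit Defensive.

(* The algorithm keeps, for the presented prefix P, a proper (k+1)-coloring f of the ball
   of radius S = 3k log n + 2 around P, and just outputs any color that keeps this invariant
   true; the invariant is read off the visible part of the graph, so the locality is S + l.
   The components of the ball are called groups.  In a group with s presented vertices,
   every vertex at distance more than 3k log s + 1 from them is colored s_g(c(x)) for a
   permutation s_g (the frame) and a proper k-coloring c of the visible region; as G is in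
   L_{k,l}, c can be taken global, so frames of different groups are comparable.
   When a new vertex merges groups, the largest one keeps its frame and each other one
   switches to it across a band of 3k layers, one transposition of colors per three layers,
   using the spare color k+1.  A group loses only if the merged group has more than twice
   its size, so its radius 3k log s + 1 grows by at least 3k, which leaves room for the
   band; and the radius never exceeds S. *)

Section Balls.
Variables (V : finType) (e : rel V).

Lemma nball_center t u : u \in nball e t u.
Proof. by elim: t => [|t IH] /=; rewrite inE ?IH. Qed.

Lemma nballS t u x : x \in nball e t u -> x \in nball e t.+1 u.
Proof. by move=> Hx /=; rewrite inE Hx. Qed.

Lemma nball_le t t' u x : t <= t' -> x \in nball e t u -> x \in nball e t' u.
Proof.
move=> /subnKC <-; elim: (t' - t) => [|m IH] Hx; first by rewrite addn0.
by rewrite addnS; apply/nballS/IH.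
Qed.

Lemma nball_edge t u x y : x \in nball e t u -> e x y -> y \in nball e t.+1 u.
Proof.
move=> Hx Hxy /=; rewrite !inE; apply/orP; right.
by apply/existsP; exists x; rewrite Hx.
Qed.

Lemma nballSP t u y : y \in nball e t.+1 u ->
  y \in nball e t u \/ exists2 x, x \in nball e t u & e x y.
Proof.
rewrite /= !inE => /orP [H|/existsP [x /andP [Hx Hxy]]]; first by left.
by right; exists x.
Qed.

Lemma nball_trans s t u x y : x \in nball e s u -> y \in nball e t x ->
  y \in nball e (s + t) u.
Proof.
move=> Hx; elim: t y => [|t IH] y; first by rewrite /= inE addn0 => /eqP ->.
rewrite addnS => /nballSP [Hy|[z Hz Hzy]]; first exact/nballS/IH.
exact: nball_edge (IH _ Hz) Hzy.
Qed.

Lemma ballP t (A : {set V}) y :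
  reflect (exists2 u, u \in A & y \in nball e t u) (y \in ball e t A).
Proof. by apply: (iffP bigcupP) => [[u Hu Hy]|[u Hu Hy]]; exists u. Qed.

Lemma ball_le t t' (A B : {set V}) y : t <= t' -> A \subset B ->
  y \in ball e t A -> y \in ball e t' B.
Proof.
move=> Ht /subsetP AB /ballP [u Hu Hy]; apply/ballP.
by exists u; [exact: AB | exact: nball_le Ht Hy].
Qed.

Lemma sub_ball t (A : {set V}) : A \subset ball e t A.
Proof. by apply/subsetP => u Hu; apply/ballP; exists u => //; apply: nball_center. Qed.

Lemma ball_edge t (A : {set V}) x y :
  x \in ball e t A -> e x y -> y \in ball e t.+1 A.
Proof. by move=> /ballP [u Hu Hx] Hxy; apply/ballP; exists u => //; exact: nball_edge Hx Hxy. Qed.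

Definition induced (D : {set V}) : rel V := fun a b => [&& a \in D, b \in D & e a b].

Lemma connect_induced_nball (D : {set V}) t u : nball e t u \subset D ->
  forall y, y \in nball e t u -> connect (induced D) u y.
Proof.
elim: t => [|t IH] sub y; first by rewrite /= inE => /eqP ->.
have sub' : nball e t u \subset D.
  by apply: subset_trans sub; apply/subsetP => z; apply: nballS.
move/nballSP => [Hy|[z Hz Hzy]]; first exact: IH.
apply: connect_trans (IH sub' _ Hz) (connect1 _).
by rewrite /induced Hzy (subsetP sub' _ Hz) (subsetP sub _ (nball_edge Hz Hzy)).
Qed.

(* [dist N A y] is the distance from [A] to [y] when it is below [N], and [N] otherwise. *)
Definition dist (N : nat) (A : {set V}) (y : V) : nat :=
  find (fun t => y \in ball e t A) (iota 0 N).

Lemma dist_le N A y t : t < N -> y \in ball e t A -> dist N A y <= t.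
Proof.
move=> HtN Hy; rewrite /dist leqNgt; apply/negP => Hlt.
have := before_find 0 Hlt; rewrite nth_iota ?add0n ?Hy //.
Qed.

Lemma ball_dist N A y t : t < N -> y \in ball e t A -> y \in ball e (dist N A y) A.
Proof.
move=> HtN Hy.
have Hhas : has (fun t => y \in ball e t A) (iota 0 N).
  by apply/hasP; exists t => //; rewrite mem_iota.
have := nth_find 0 Hhas; rewrite /dist nth_iota ?add0n //.
by move: Hhas; rewrite has_find size_iota.
Qed.

Lemma dist_gt N A y t : y \in ball e (dist N A y) A -> y \notin ball e t A ->
  t < dist N A y.
Proof.
move=> Hd Hn; rewrite ltnNge; apply/negP => Hle.
by move: Hn; rewrite (ball_le Hle (subxx _) Hd).
Qed.

End Balls.

(** * Recoloring between frames *)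

Section FrameChain.
Variable k : nat.

Definition layer_compatible (H H' : 'I_k -> nat) := forall a b, a != b -> H a != H' b.

(* A recoloring from the frame [s0] to the frame [s1] in [M] layers: vertex [x] of
   layer [t] gets color [F t (cs x)], and neighbouring layers never clash. *)
Definition frame_chain (F : nat -> 'I_k -> nat) (s0 s1 : {perm 'I_k}) (M : nat) :=
  [/\ forall a, F 0 a = (s0 a).+1, forall t a, M <= t -> F t a = (s1 a).+1,
      forall t a, 0 < F t a <= k.+1, forall t, injective (F t)
    & forall t, layer_compatible (F t) (F t.+1)].

Lemma perm_succ_inj (s : {perm 'I_k}) : injective (fun a => (s a).+1).
Proof. by move=> a b [] /val_inj /perm_inj. Qed.

Lemma perm_succ_neq (s : {perm 'I_k}) a b : a != b -> (s a).+1 != (s b).+1.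
Proof. by move=> ab; rewrite eqSS; apply: contra ab => /eqP /val_inj /perm_inj ->. Qed.

Lemma perm_succ_range (s : {perm 'I_k}) a : 0 < (s a).+1 <= k.+1.
Proof. by rewrite /= ltnS ltnW. Qed.

Lemma perm_succ_spare (s : {perm 'I_k}) a : (s a).+1 != k.+1.
Proof. by rewrite eqSS neq_ltn ltn_ord. Qed.

Lemma frame_chain_refl (s : {perm 'I_k}) M : frame_chain (fun _ a => (s a).+1) s s M.
Proof.
split=> // [t a|t|t a b]; [exact: perm_succ_range | exact: perm_succ_inj | exact: perm_succ_neq].
Qed.

Lemma perm_diff0_eq (s0 s1 : {perm 'I_k}) : [set a | s0 a != s1 a] = set0 -> s0 = s1.
Proof.
by move=> E0; apply/permP => a; apply/eqP/contraT => Ha; move/setP/(_ a): E0; rewrite !inE Ha.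
Qed.

Definition upd (H : 'I_k -> nat) x c := fun a => if a == x then c else H a.

Lemma upd_inj H x c : injective H -> (forall a, H a != c) -> injective (upd H x c).
Proof.
move=> Hi Hc a b; rewrite /upd.
case: eqP => [->|_]; case: eqP => [->|_] // E.
- by move: (Hc b); rewrite -E eqxx.
- by move: (Hc a); rewrite E eqxx.
- exact: Hi.
Qed.

Lemma layer_compatible_upd H x c : injective H -> (forall a, H a != c) ->
  layer_compatible H (upd H x c).
Proof.
move=> Hi Hc a b ab; rewrite /upd; case: (b =P x) => _; first exact: Hc.
by apply: contra ab => /eqP /Hi ->.
Qed.

(* Swapping the colors of [i] and [j] takes three layers, using the spare color [k.+1]. *)
Lemma frame_chain_tperm (s0 s1 : {perm 'I_k}) i j M G : i != j ->
  frame_chain G (tperm i j * s0)%g s1 M -> exists F, frame_chain F s0 s1 M.+3.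
Proof.
move=> ij [G0 G1 G2 G3 G4].
pose f0 a := (s0 a).+1.
pose f1 := upd f0 i k.+1.
pose f2 := upd f1 j (s0 i).+1.
pose f3 := upd f2 i (s0 j).+1.
have i0 : injective f0 by apply: perm_succ_inj.
have c1 a : f0 a != k.+1 by apply: perm_succ_spare.
have i1 : injective f1 by apply: upd_inj.
have c2 a : f1 a != (s0 i).+1.
  rewrite /f1 /upd; case: (a =P i) => [_|/eqP ai]; first by rewrite eq_sym perm_succ_spare.
  exact: perm_succ_neq.
have i2 : injective f2 by apply: upd_inj.
have c3 a : f2 a != (s0 j).+1.
  rewrite /f2 /f1 /upd; case: (a =P j) => [_|/eqP aj]; first exact: perm_succ_neq.
  case: (a =P i) => [_|_]; first by rewrite eq_sym perm_succ_spare.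
  exact: perm_succ_neq.
have f3E a : f3 a = G 0 a.
  rewrite G0 permM /f3 /f2 /f1 /upd /f0.
  have [->|ai] := eqVneq a i; first by rewrite tpermL.
  have [->|aj] := eqVneq a j; first by rewrite tpermR.
  by rewrite tpermD // eq_sym.
have r1 a : 0 < f1 a <= k.+1.
  by rewrite /f1 /upd; case: ifP => _; [rewrite /= ltnSn | exact: perm_succ_range].
have r2 a : 0 < f2 a <= k.+1.
  by rewrite /f2 /upd; case: ifP => _; [exact: perm_succ_range | exact: r1].
exists (fun t => match t with 0 => f0 | 1 => f1 | 2 => f2 | t'.+3 => G t' end).
split=> //.
- by move=> [|[|[|t]]] a //; apply: G1.
- by move=> [|[|[|t]]] a; [exact: perm_succ_range | exact: r1 | exact: r2 | exact: G2].
- by case=> [|[|[|t]]].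
- case=> [|[|[|t]]] //; try exact: layer_compatible_upd.
  by move=> a b ab; rewrite -f3E; apply: layer_compatible_upd.
Qed.

Lemma frame_chain_card m (s0 s1 : {perm 'I_k}) : #|[set a | s0 a != s1 a]| <= m ->
  exists F, frame_chain F s0 s1 (3 * m).
Proof.
elim: m s0 => [|m IH] s0 Hm; have [E0|[i Hi]] := set_0Vmem [set a | s0 a != s1 a];
  try by rewrite (perm_diff0_eq E0); eexists; apply: frame_chain_refl.
  by move: Hm; rewrite (cardsD1 i) Hi.
rewrite inE in Hi.
pose j := (s0^-1)%g (s1 i).
have s0j : s0 j = s1 i by rewrite /j permKV.
have ij : i != j by apply: contra Hi => /eqP ij; rewrite -s0j -ij.
pose s' := (tperm i j * s0)%g.
have Hsub : [set a | s' a != s1 a] \subset [set a | s0 a != s1 a] :\ i.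
  apply/subsetP => a; rewrite !inE permM.
  have [->|ai] := eqVneq a i; first by rewrite tpermL s0j eqxx.
  have [->|aj] := eqVneq a j; last by rewrite tpermD // 1?eq_sym // ai.
  by rewrite tpermR s0j (inj_eq perm_inj) eq_sym ij.
have Hm' : #|[set a | s' a != s1 a]| <= m.
  apply: leq_trans (subset_leq_card Hsub) _.
  by move: Hm; rewrite (cardsD1 i) inE Hi.
have [G HG] := IH _ Hm'.
by rewrite mulnS addnC addn3; apply: frame_chain_tperm ij HG.
Qed.

Lemma exists_frame_chain (s0 s1 : {perm 'I_k}) : exists F, frame_chain F s0 s1 (3 * k).
Proof.
by apply: frame_chain_card; apply: leq_trans (max_card _) _; rewrite card_ord.
Qed.

Lemma frame_chain_neq F s0 s1 M t t' a b : frame_chain F s0 s1 M -> a != b ->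
  t <= t'.+1 -> t' <= t.+1 -> F t a != F t' b.
Proof.
move=> [_ _ _ Hi Hc] ab tt' t't.
have [<-|[->|->]] : t = t' \/ t' = t.+1 \/ t = t'.+1 by lia.
- by apply: contra ab => /eqP /Hi ->.
- exact: Hc.
- by rewrite eq_sym; apply: Hc; rewrite eq_sym.
Qed.

End FrameChain.

(** * The invariant *)

Section Invariant.
Variables (k l n : nat).

Definition core_radius := 3 * k * trunc_log 2 n + 2.
Definition locality := core_radius + l.
Definition margin s := 3 * k * (trunc_log 2 n - trunc_log 2 s) + 1.

Lemma margin_gt0 s : 0 < margin s.
Proof. by rewrite /margin addn1. Qed.

Lemma margin_lt s : margin s < core_radius.
Proof. by rewrite /margin /core_radius addn2 addn1 !ltnS leq_mul2l leq_subr orbT. Qed.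

Lemma leq_margin s s' : s <= s' -> margin s' <= margin s.
Proof.
by move=> ss'; rewrite leq_add2r leq_mul2l leq_sub2l ?orbT // leq_trunc_log.
Qed.

(* A group that at least doubles gains [3 k] in radius. *)
Lemma margin_double s s' : 0 < s -> s + s < s' -> s' <= n ->
  3 * k + 1 <= margin s /\ margin s' + 3 * k <= margin s.
Proof.
move=> s0 ss' s'n.
have H1 : (trunc_log 2 s).+1 <= trunc_log 2 s'.
  by rewrite -trunc_logMp // leq_trunc_log // mul2n -addnn ltnW.
have H2 : trunc_log 2 s' <= trunc_log 2 n by apply: leq_trunc_log.
have H3 : (trunc_log 2 n - trunc_log 2 s').+1 <= trunc_log 2 n - trunc_log 2 s by lia.
split.
  rewrite leq_add2r; apply: leq_trans (leq_mul (leqnn _) H3).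
  by rewrite mulnS leq_addr.
by rewrite addnAC leq_add2r addnC -mulnS leq_mul2l H3 orbT.
Qed.

Variables (U : finType) (e : rel U).

Definition core (P : seq U) := ball e core_radius [set x in P].
Definition visible (P : seq U) := ball e locality [set x in P].
Definition linked (P : seq U) := connect (induced e (core P)).
Definition anchors (P : seq U) y := [set u in P | linked P u y].
(* Beyond distance [core_radius - margin s = 3 k log s + 1] from the [s] anchors of its
   group, a vertex is settled: its color is dictated by the frame of the group. *)
Definition settled (P : seq U) y :=
  y \notin ball e (core_radius - margin #|anchors P y|) (anchors P y).

Definition online_invariant (P : seq U) (o : seq nat) : Prop := exists f : U -> nat,
  [/\ map f P = o, forall x, x \in core P -> 0 < f x <= k.+1,
      proper_on e (core P) f &
      forall x, x \in core P -> exists (s : {perm 'I_k}) (chi : U -> 'I_k),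
         proper_on e (visible P) chi /\
         forall y, linked P x y -> settled P y -> f y = (s (chi y)).+1].

End Invariant.

Section Groups.
Variables (V : finType) (e : rel V).
Hypothesis esym : symmetric e.

Lemma induced_sym (D : {set V}) : symmetric (induced e D).
Proof. by move=> a b; rewrite /induced esym andbCA andbA. Qed.

Lemma connect_induced_sym (D : {set V}) : connect_sym (induced e D).
Proof. exact/sym_connect_sym/induced_sym. Qed.

Lemma connect_induced_mem (D : {set V}) x y :
  connect (induced e D) x y -> x = y \/ y \in D.
Proof.
move/connectP => [p]; elim: p x => [|z p IH] x /=; first by move=> _ ->; left.
move=> /andP [/and3P [_ zD _] Hp] Hy; right.
by case: (IH z Hp Hy) => [<-|].
Qed.

Lemma connect_induced_sub (D D' : {set V}) x y : D \subset D' ->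
  connect (induced e D) x y -> connect (induced e D') x y.
Proof.
move=> /subsetP DD; apply: connect_sub => a b /and3P [aD bD ab].
by apply: connect1; rewrite /induced ab !DD.
Qed.

Lemma connect_induced_component (D : {set V}) x a b :
  connect (induced e D) x a -> connect (induced e D) a b ->
  connect (induced e [set y | connect (induced e D) x y]) a b.
Proof.
move=> xa /connectP [p]; elim: p a xa => [|z p IH] a xa /=; first by move=> _ ->.
move=> /andP [az Hp] Hb.
have xz : connect (induced e D) x z by apply: connect_trans xa (connect1 az).
apply: connect_trans (IH z xz Hp Hb); apply: connect1.
by rewrite /induced !inE xa xz; case/and3P: az.
Qed.

Variables (k n : nat).
Local Notation core := (core k n e).
Local Notation linked := (linked k n e).

Lemma core_anchor (P : seq V) x : x \in core P ->
  exists2 u, u \in P & linked P u x /\ x \in nball e (core_radius k n) u.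
Proof.
move=> /ballP [u]; rewrite inE => uP Hx; exists u => //; split => //.
apply: connect_induced_nball Hx; apply/subsetP => z Hz; apply/ballP; exists u => //.
by rewrite inE.
Qed.

Lemma mem_core_linked (P : seq V) x y : x \in core P -> linked P x y -> y \in core P.
Proof. by move=> Hx /connect_induced_mem [<-|]. Qed.

Lemma linked_sym (P : seq V) x y : linked P x y = linked P y x.
Proof. exact: connect_induced_sym. Qed.

Lemma linked_trans (P : seq V) x y z : linked P x y -> linked P y z -> linked P x z.
Proof. exact: connect_trans. Qed.

Lemma anchors_linked (P : seq V) x y :
  linked P x y -> anchors k n e P x = anchors k n e P y.
Proof.
move=> xy; apply/setP => u; rewrite !inE; case: (u \in P) => //=.
by apply/idP/idP => H; [exact: linked_trans H xy | by apply: linked_trans H _; rewrite linked_sym].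
Qed.

End Groups.

(* As [G] is in [L_class], the coloring of a frame may be replaced by a single global
   proper [k]-coloring [cs]. *)
Section GlobalFrame.
Variables (V : finType) (e : rel V) (k l n : nat).
Hypothesis esym : symmetric e.
Variable cs : V -> 'I_k.
Hypothesis cs_proper : proper_on e [set: V] cs.
Hypothesis Luniq : forall (V' : {set V}) (E' : rel V), connected_subgraph e V' E' ->
  forall c c' : V -> 'I_k,
    proper_on e (ball e l V') c -> proper_on e (ball e l V') c' ->
    exists phi : {perm 'I_k}, forall x, x \in V' -> c' x = phi (c x).

Lemma global_frame (P : seq V) (f : V -> nat) x (s : {perm 'I_k}) (chi : V -> 'I_k) :
  x \in core k n e P -> proper_on e (visible k l n e P) chi ->
  (forall y, linked k n e P x y -> settled k n e P y -> f y = (s (chi y)).+1) ->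
  exists s' : {perm 'I_k}, forall y, linked k n e P x y -> settled k n e P y ->
     f y = (s' (cs y)).+1.
Proof.
move=> xC Hchi Hf.
pose V' := [set y | linked k n e P x y].
have Hcs : connected_subgraph e V' (induced e V').
  split=> [//|a b|a b]; first exact: induced_sym.
  rewrite !inE => xa xb; apply: (connect_induced_component xa).
  by apply: linked_trans xb; rewrite linked_sym.
have Hball : ball e l V' \subset visible k l n e P.
  apply/subsetP => y /ballP [z]; rewrite inE => /(mem_core_linked xC) /ballP [u uP Hz] Hy.
  by apply/ballP; exists u => //; exact: nball_trans Hz Hy.
have chi_proper : proper_on e (ball e l V') chi.
  by move=> a b Ha Hb; apply: Hchi; apply: (subsetP Hball).
have cs_proper' : proper_on e (ball e l V') cs by move=> a b _ _; apply: cs_proper.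
have [phi Hphi] := Luniq Hcs chi_proper cs_proper'.
exists (phi^-1 * s)%g => y xy Hy.
by rewrite Hf // permM Hphi ?inE // permK.
Qed.

End GlobalFrame.

(** * Extending the coloring to a new vertex *)

Section Step.
Variables (V : finType) (e : rel V) (k l : nat).
Let n := #|V|.
Hypothesis esym : symmetric e.
Variable cs : V -> 'I_k.
Hypothesis cs_proper : proper_on e [set: V] cs.
Variable ch : {perm 'I_k} -> {perm 'I_k} -> nat -> 'I_k -> nat.
Hypothesis ch_chain : forall s0 s1, frame_chain (ch s0 s1) s0 s1 (3 * k).
Variables (P : seq V) (v : V) (f : V -> nat) (frames : V -> {perm 'I_k}).
Hypothesis vP : v \notin P.
Local Notation S := (core_radius k n).
Local Notation core := (core k n e).
Local Notation linked := (linked k n e).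
Local Notation anchors := (anchors k n e).
Local Notation settled := (settled k n e).
Local Notation margin := (margin k n).
Let P' := rcons P v.
Hypothesis f_range : forall x, x \in core P -> 0 < f x <= k.+1.
Hypothesis f_proper : proper_on e (core P) f.
Hypothesis f_frame : forall x, x \in core P -> forall y, linked P x y -> settled P y ->
  f y = (frames x (cs y)).+1.

Lemma cs_neq x y : e x y -> cs x != cs y.
Proof. by move=> exy; apply: cs_proper; rewrite ?inE. Qed.

Lemma mem_core_rcons y : (y \in core P') = (y \in core P) || (y \in nball e S v).
Proof.
apply/ballP/orP => [[u]|[/ballP [u uP Hy]|Hy]].
- rewrite inE mem_rcons inE => /orP [/eqP ->|uP Hy]; first by right.
  by left; apply/ballP; exists u; rewrite ?inE.
- by exists u; rewrite // inE mem_rcons inE; rewrite inE in uP; rewrite uP orbT.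
- by exists v; rewrite // inE mem_rcons inE eqxx.
Qed.

Lemma core_rcons y : y \in core P -> y \in core P'.
Proof. by rewrite mem_core_rcons => ->. Qed.

Lemma linked_rcons x y : linked P x y -> linked P' x y.
Proof. by apply: connect_induced_sub; apply/subsetP => z; apply: core_rcons. Qed.

Lemma anchors_rcons x : anchors P x \subset anchors P' x.
Proof.
apply/subsetP => u; rewrite !inE mem_rcons inE => /andP [-> /linked_rcons ->].
by rewrite orbT.
Qed.

Lemma mem_core_prefix u : u \in P -> u \in core P.
Proof. by move=> uP; apply: (subsetP (sub_ball _ _ _)); rewrite inE. Qed.

Lemma core_ball_anchors x : x \in core P -> x \in ball e S (anchors P x).
Proof.
by move=> /core_anchor [u uP [ux Hx]]; apply/ballP; exists u; rewrite // inE uP.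
Qed.

Lemma card_anchors_gt0 x : x \in core P -> 0 < #|anchors P x|.
Proof.
move=> /core_anchor [u uP [ux _]]; rewrite card_gt0.
by apply/set0Pn; exists u; rewrite inE uP.
Qed.

Lemma anchors_sub x : anchors P x \subset [set u in P].
Proof. by apply/subsetP => u; rewrite !inE => /andP []. Qed.

Let merged := [set y | linked P' v y].

Lemma nball_merged y : y \in nball e S v -> y \in merged.
Proof.
move=> Hy; rewrite inE; apply: connect_induced_nball Hy.
by apply/subsetP => z Hz; rewrite mem_core_rcons Hz orbT.
Qed.

Lemma merged_linked x y : x \in merged -> linked P' x y -> y \in merged.
Proof. by rewrite !inE => vx xy; apply: connect_trans vx xy. Qed.

Lemma merged_linked_old x y : x \in merged -> linked P x y -> y \in merged.
Proof. by move=> Hx /linked_rcons; apply: merged_linked. Qed.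

Lemma unmerged_linked x y : x \notin merged -> linked P' x y -> y \notin merged.
Proof.
move=> Hx xy; apply: contra Hx => Hy; apply: merged_linked Hy _.
by rewrite linked_sym.
Qed.

Lemma unmerged_core x : x \in core P' -> x \notin merged -> x \in core P.
Proof. by rewrite mem_core_rcons => /orP [//|/nball_merged ->]. Qed.

Lemma unmerged_linked_old x y : x \notin merged -> linked P' x y -> linked P x y.
Proof.
move=> Hx /connectP [p]; elim: p x Hx => [|z p IH] x Hx /=; first by move=> _ ->; apply: connect0.
move=> /andP [xz Hp] Hy.
have Hz := unmerged_linked Hx (connect1 xz).
apply: connect_trans (IH z Hz Hp Hy); apply: connect1.
by case/and3P: xz => xC zC xz; rewrite /induced (unmerged_core xC Hx) (unmerged_core zC Hz).
Qed.

Lemma unmerged_anchors y : y \notin merged -> anchors P' y = anchors P y.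
Proof.
move=> Hy; apply/setP => u; rewrite !inE mem_rcons inE.
have [->|uv] := eqVneq u v.
  by rewrite (negbTE vP); apply: contraNF Hy; rewrite inE.
apply/andP/andP => [[uP uy]|[uP /linked_rcons uy]]; split => //.
by rewrite linked_sym // (unmerged_linked_old Hy) // linked_sym.
Qed.

Lemma unmerged_settled y : y \notin merged -> settled P' y = settled P y.
Proof. by move=> Hy; rewrite /settled unmerged_anchors. Qed.

Definition merged_anchor u := (u \in P) && (u \in merged).

Definition winner := if [pick u | merged_anchor u] is Some u0 then
  Some [arg max_(u > u0 | merged_anchor u) #|anchors P u|] else None.

Lemma merged_core_anchor x : x \in core P -> x \in merged ->
  exists2 u, merged_anchor u & linked P u x.
Proof.
move=> /core_anchor [u uP [ux _]] Hx; exists u => //; rewrite /merged_anchor uP /=.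
by apply: (merged_linked_old Hx); rewrite linked_sym.
Qed.

Lemma winnerP x : x \in core P -> x \in merged -> exists w, [/\ winner = Some w,
  merged_anchor w & forall u, merged_anchor u -> #|anchors P u| <= #|anchors P w|].
Proof.
move=> xC xM; have [u Hu ux] := merged_core_anchor xC xM.
rewrite /winner; case: pickP => [u0 Hu0|/(_ u)]; last by rewrite Hu.
by case: arg_maxnP => // w Hw Hmax; exists w.
Qed.

Definition in_winner x := if winner is Some w then linked P w x else false.

Lemma loser_card x : x \in core P -> x \in merged -> ~~ in_winner x ->
  #|anchors P x| + #|anchors P x| < #|anchors P' x|.
Proof.
move=> xC xM nW; have [w [Hw /andP [wP wM] Hmax]] := winnerP xC xM.
move: nW; rewrite /in_winner Hw => nwx.
have [u Hu ux] := merged_core_anchor xC xM.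
have cuw : #|anchors P x| <= #|anchors P w| by rewrite -(anchors_linked _ ux) // Hmax.
pose A := anchors P x; pose B := anchors P w.
have dAB : A :&: B = set0.
  apply/setP => z; rewrite !inE; apply: contraNF nwx => /andP [/andP [_ zx] /andP [_ zw]].
  by apply: linked_trans zx; rewrite linked_sym.
have vAB : v \notin A :|: B by rewrite !inE (negbTE vP).
have vx : linked P' v x by move: xM; rewrite inE.
have sub : v |: (A :|: B) \subset anchors P' x.
  apply/subsetP => z; rewrite !inE mem_rcons inE.
  case/orP => [/eqP ->|/orP [/andP [zP zx]|/andP [zP zw]]]; rewrite ?eqxx ?zP ?orbT //=.
    exact: linked_rcons.
  apply: linked_trans (linked_rcons zw) (linked_trans _ vx).
  by rewrite linked_sym //; move: wM; rewrite inE.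
have := subset_leq_card sub; rewrite cardsU1 vAB cardsU dAB cards0 subn0 add1n.
by apply: leq_trans; rewrite ltnS leq_add2l.
Qed.

Definition rep x := nth v P (find (linked P ^~ x) P).

Lemma rep_spec x : x \in core P -> rep x \in P /\ linked P (rep x) x.
Proof.
move=> /core_anchor [u uP [ux _]].
have Hh : has (linked P ^~ x) P by apply/hasP; exists u.
by rewrite /rep; split; [rewrite mem_nth // -has_find | exact: (nth_find v Hh)].
Qed.

Lemma rep_linked x y : linked P x y -> rep x = rep y.
Proof.
move=> xy; rewrite /rep; congr nth; apply: eq_find => u /=.
by apply/idP/idP => H; [exact: linked_trans H xy | apply: linked_trans H _; rewrite linked_sym].
Qed.

Definition frame x := frames (rep x).

Lemma frame_spec x : x \in core P -> forall y, linked P x y -> settled P y ->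
  f y = (frame x (cs y)).+1.
Proof.
move=> xC y xy Hy; have [rP rx] := rep_spec xC.
by apply: f_frame => //; [exact: mem_core_prefix | exact: linked_trans rx xy].
Qed.

Definition winner_frame := if winner is Some w then frame w else 1%g.

Lemma winner_frameE x : in_winner x -> frame x = winner_frame.
Proof.
by rewrite /in_winner /winner_frame; case: winner => // w wx; rewrite /frame (rep_linked wx).
Qed.

Definition dirty_radius y := S - margin #|anchors P y|.
Definition depth y := dist e S.+2 (anchors P y) y.
Definition layer y := (depth y - dirty_radius y).-1.

Lemma depth_le x : x \in core P -> depth x <= S.
Proof. by move=> xC; apply: dist_le => //; apply: core_ball_anchors. Qed.

Lemma ball_depth x : x \in core P -> x \in ball e (depth x) (anchors P x).
Proof. by move=> xC; apply: (@ball_dist _ _ _ _ _ S) => //; apply: core_ball_anchors. Qed.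

Lemma settledE x : x \in core P -> settled P x = (dirty_radius x < depth x).
Proof.
move=> xC; rewrite /settled; apply/idP/idP => [|H]; first exact: dist_gt (ball_depth xC).
apply: contraL H => Hb; rewrite -leqNgt dist_le //.
by rewrite /dirty_radius; lia.
Qed.

Lemma depth_edge x y : x \in core P -> linked P x y -> e x y -> depth y <= (depth x).+1.
Proof.
move=> xC xy exy; rewrite /depth -(anchors_linked _ xy) //.
by apply: dist_le; [rewrite !ltnS; exact: depth_le xC | exact: ball_edge (ball_depth xC) exy].
Qed.

Lemma linked_group x y : linked P x y ->
  [/\ in_winner x = in_winner y, frame x = frame y & dirty_radius x = dirty_radius y].
Proof.
move=> xy; split; last by rewrite /dirty_radius (anchors_linked _ xy).
- rewrite /in_winner; case: winner => // w.
  by apply/idP/idP => H; [exact: linked_trans H xy | apply: linked_trans H _; rewrite linked_sym].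
- by rewrite /frame (rep_linked xy).
Qed.

Lemma loser_dirty_radius x : x \in core P -> x \in merged -> ~~ in_winner x ->
  dirty_radius x + 3 * k <= S.-1 /\
  dirty_radius x + 3 * k <= S - margin #|anchors P' x|.
Proof.
move=> xC xM nW.
have [H1 H2] := margin_double k (card_anchors_gt0 xC) (loser_card xC xM nW) (max_card _ : _ <= n).
by have := margin_lt k n #|anchors P x|; rewrite /dirty_radius; lia.
Qed.

Definition extension y := if y \in merged then
   (if y \in core P then
      (if in_winner y then f y
       else if settled P y then ch (frame y) winner_frame (layer y) (cs y) else f y)
    else (winner_frame (cs y)).+1)
  else f y.

Lemma extension_loser x : x \in core P -> x \in merged -> ~~ in_winner x ->
  extension x = if dirty_radius x < depth x
                then ch (frame x) winner_frame (layer x) (cs x) else f x.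
Proof. by move=> xC xM nW; rewrite /extension xM xC (negbTE nW) settledE. Qed.

Lemma extension_winner x : x \in core P -> x \in merged -> in_winner x -> extension x = f x.
Proof. by move=> xC xM W; rewrite /extension xM xC W. Qed.

Lemma extension_new x : x \in merged -> x \notin core P ->
  extension x = (winner_frame (cs x)).+1.
Proof. by move=> xM xC; rewrite /extension xM (negbTE xC). Qed.

Lemma extension_unmerged x : x \notin merged -> extension x = f x.
Proof. by move=> xM; rewrite /extension (negbTE xM). Qed.

Lemma extension_loser_edge x y : x \in core P -> y \in core P -> x \in merged ->
  ~~ in_winner x -> e x y -> extension x != extension y.
Proof.
move=> xC yC xM nW exy.
have xy : linked P x y by apply: connect1; rewrite /induced xC yC exy.
have yx : linked P y x by rewrite linked_sym.
have [Wxy Fxy Dxy] := linked_group xy.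
have yM := merged_linked_old xM xy.
have nWy : ~~ in_winner y by rewrite -Wxy.
have Lxy := depth_edge xC xy exy.
have Lyx : depth x <= (depth y).+1 by apply: depth_edge yC yx _; rewrite esym.
rewrite (extension_loser xC xM nW) (extension_loser yC yM nWy) /layer -Fxy -Dxy.
have [H0 _ _ _ _] := ch_chain (frame x) winner_frame.
case: ltnP => Hx; case: ltnP => Hy.
- by apply: frame_chain_neq (ch_chain _ _) (cs_neq exy) _ _; lia.
(* Only one endpoint is settled: it lies in layer 0, where the chain still uses [frame x]. *)
- have -> : depth x = (dirty_radius x).+1 by lia.
  rewrite subSn // subnn /= H0 -(frame_spec xC (linked_trans xy yx)) ?settledE //.
  exact: f_proper.
- have -> : depth y = (dirty_radius x).+1 by lia.
  rewrite subSn // subnn /= H0 Fxy -(frame_spec yC (linked_trans yx xy)) ?settledE -?Dxy //.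
  exact: f_proper.
- exact: f_proper.
Qed.

Lemma extension_loser_far x : x \in core P -> x \in merged -> ~~ in_winner x ->
  x \notin ball e (dirty_radius x + 3 * k) (anchors P x) ->
  extension x = (winner_frame (cs x)).+1.
Proof.
move=> xC xM nW Hn; have [HS _] := loser_dirty_radius xC xM nW.
have Hd : dirty_radius x + 3 * k < depth x by apply: dist_gt Hn; exact: ball_depth.
rewrite (extension_loser xC xM nW) ifT; last by lia.
by have [_ H1 _ _ _] := ch_chain (frame x) winner_frame; apply: H1; rewrite /layer; lia.
Qed.

Lemma extension_winner_settled x : x \in core P -> in_winner x -> settled P x ->
  extension x = (winner_frame (cs x)).+1.
Proof.
move=> xC W Hc; rewrite -(winner_frameE W) -(frame_spec xC (connect0 _ _) Hc) /extension.
by case: ifP => // _; rewrite xC W.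
Qed.

Lemma core_boundary_far x y : x \in core P -> y \notin core P -> e x y ->
  x \notin ball e S.-1 [set u in P].
Proof.
move=> xC yC exy; apply: contra yC => Hx.
by have := ball_edge Hx exy; rewrite prednK // /core_radius addn2.
Qed.

Lemma extension_boundary x y : x \in core P -> x \in merged -> y \notin core P -> e x y ->
  extension x = (winner_frame (cs x)).+1.
Proof.
move=> xC xM yC exy; have Hfar := core_boundary_far xC yC exy.
have [W|nW] := boolP (in_winner x).
  apply: extension_winner_settled => //; apply: contra Hfar.
  apply: ball_le (anchors_sub x); rewrite /dirty_radius.
  by have := margin_gt0 k n #|anchors P x|; lia.
have [HS _] := loser_dirty_radius xC xM nW.
by apply: extension_loser_far => //; apply: contra Hfar; apply: ball_le (anchors_sub x).
Qed.

Lemma extension_proper : proper_on e (core P') extension.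
Proof.
move=> x y xC' yC' exy.
have xy' : linked P' x y by apply: connect1; rewrite /induced xC' yC' exy.
have [xM|nxM] := boolP (x \in merged); last first.
  have nyM := unmerged_linked nxM xy'.
  rewrite (extension_unmerged nxM) (extension_unmerged nyM).
  by apply: f_proper => //; exact: unmerged_core.
have yM := merged_linked xM xy'.
case xC: (x \in core P); case yC: (y \in core P).
- have xy : linked P x y by apply: connect1; rewrite /induced xC yC exy.
  have [Wxy _ _] := linked_group xy.
  have [W|nW] := boolP (in_winner x); last exact: extension_loser_edge.
  rewrite (extension_winner xC xM W) (extension_winner yC yM) -?Wxy //.
  exact: f_proper.
- rewrite (extension_boundary xC xM (negbT yC) exy) (extension_new yM (negbT yC)).
  exact/perm_succ_neq/cs_neq.
- have eyx : e y x by rewrite esym.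
  rewrite (extension_boundary yC yM (negbT xC) eyx) (extension_new xM (negbT xC)).
  exact/perm_succ_neq/cs_neq.
- rewrite (extension_new xM (negbT xC)) (extension_new yM (negbT yC)).
  exact/perm_succ_neq/cs_neq.
Qed.

Lemma extension_range x : x \in core P' -> 0 < extension x <= k.+1.
Proof.
move=> xC'; rewrite /extension; case: ifPn => xM; last exact/f_range/unmerged_core.
case: ifP => xC; last exact: perm_succ_range.
case: ifP => _; first exact: f_range.
case: ifP => _; last exact: f_range.
by have [_ _ H _ _] := ch_chain (frame x) winner_frame; apply: H.
Qed.

Lemma map_extension : map extension P = map f P.
Proof.
apply/eq_in_map => u uP; rewrite /extension; case: ifP => // uM.
rewrite mem_core_prefix //; case: ifP => // _.
suff -> : settled P u = false by [].
by apply/negbTE/negPn/ballP; exists u; [rewrite inE uP; exact: connect0 | exact: nball_center].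
Qed.

Lemma extension_frame x : x \in core P' -> exists s : {perm 'I_k},
  forall y, linked P' x y -> settled P' y -> extension y = (s (cs y)).+1.
Proof.
move=> xC'; have [xM|nxM] := boolP (x \in merged); last first.
  exists (frame x) => y xy; have nyM := unmerged_linked nxM xy.
  rewrite (unmerged_settled nyM) (extension_unmerged nyM).
  exact: (frame_spec (unmerged_core xC' nxM) (unmerged_linked_old nxM xy)).
exists winner_frame => y xy Hc; have yM := merged_linked xM xy.
case yC: (y \in core P); last exact: extension_new yM (negbT yC).
have [W|nW] := boolP (in_winner y).
  apply: extension_winner_settled => //; apply: contra Hc.
  apply: ball_le (anchors_rcons y); rewrite leq_sub2l //.
  exact/leq_margin/subset_leq_card/anchors_rcons.
have [_ HS] := loser_dirty_radius yC yM nW.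
by apply: extension_loser_far => //; apply: contra Hc; apply: ball_le (anchors_rcons y).
Qed.

Lemma online_invariant_rcons (o : seq nat) : map f P = o ->
  online_invariant k l n e P' (rcons o (extension v)).
Proof.
move=> Ho; exists extension; split.
- by rewrite /P' map_rcons map_extension Ho.
- exact: extension_range.
- exact: extension_proper.
- move=> x xC'; have [s Hs] := extension_frame xC'; exists s, cs; split => //.
  by move=> a b _ _ ab; apply: cs_proper; rewrite ?inE.
Qed.

End Step.

(** * The invariant is local *)

Section Image.
Variables (V U : finType) (e : rel V) (eU : rel U) (i : V -> U) (W : {set V}).
Variables (k l n : nat).
Hypothesis k_gt0 : 0 < k.
Hypothesis i_inj : injective i.
Hypothesis eU_image : forall x y, eU (i x) (i y) = [&& x \in W, y \in W & e x y].
Hypothesis eU_range : forall a b, eU a b -> (exists x, a = i x) /\ (exists y, b = i y).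
Variable P : seq V.
Hypothesis visible_sub : visible k l n e P \subset W.

Lemma nball_image t u : u \in P -> t <= locality k l n ->
  nball eU t (i u) = i @: nball e t u.
Proof.
move=> uP; elim: t => [|t IH] tT; first by rewrite /= imset_set1.
have {}IH := IH (ltnW tT).
have sub : nball e t.+1 u \subset W.
  apply: subset_trans visible_sub; apply/subsetP => y Hy.
  by apply/ballP; exists u; rewrite ?inE // (nball_le tT Hy).
apply/setP => b; apply/idP/idP.
  move/nballSP => [|[a Ha ab]].
    by rewrite IH => /imsetP [y Hy ->]; rewrite mem_imset ?nballS.
  have [[x Ex] [y Ey]] := eU_range ab; subst a b.
  move: Ha ab; rewrite IH mem_imset // eU_image => Hx /and3P [_ _ exy].
  by rewrite mem_imset //; apply: nball_edge Hx exy.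
move/imsetP => [y /nballSP [Hy|[x Hx exy]] ->]; first by apply: nballS; rewrite IH mem_imset.
apply: (@nball_edge _ _ _ _ (i x)); first by rewrite IH mem_imset.
by rewrite eU_image exy (subsetP sub x (nballS Hx)) (subsetP sub y (nball_edge Hx exy)).
Qed.

Lemma ball_image t (A : {set V}) : A \subset [set x in P] -> t <= locality k l n ->
  ball eU t (i @: A) = i @: ball e t A.
Proof.
move=> /subsetP AP tT; apply/setP => b; apply/ballP/imsetP.
  move=> [a /imsetP [u uA ->]]; have uP := AP _ uA; rewrite inE in uP.
  rewrite nball_image // => /imsetP [y Hy ->].
  by exists y => //; apply/ballP; exists u.
move=> [y /ballP [u uA Hy] ->]; have uP := AP _ uA; rewrite inE in uP.
by exists (i u); rewrite ?mem_imset // nball_image // mem_imset.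
Qed.

Lemma set_mem_map : [set x in map i P] = i @: [set x in P].
Proof.
apply/setP => a; rewrite inE; apply/mapP/imsetP => [[x xP ->]|[x xP ->]]; exists x => //.
  by rewrite inE.
by rewrite inE in xP.
Qed.

Lemma core_image : core k n eU (map i P) = i @: core k n e P.
Proof. by rewrite /core set_mem_map ball_image // /locality leq_addr. Qed.

Lemma visible_image : visible k l n eU (map i P) = i @: visible k l n e P.
Proof. by rewrite /visible set_mem_map ball_image. Qed.

Lemma core_sub : core k n e P \subset W.
Proof.
by apply: subset_trans visible_sub; apply/subsetP => x; apply: ball_le (leq_addr _ _) _.
Qed.

Lemma induced_image x y :
  induced eU (i @: core k n e P) (i x) (i y) = induced e (core k n e P) x y.
Proof.
rewrite /induced !mem_imset // eU_image.
by case xC: (x \in _); case yC: (y \in _); rewrite //= !(subsetP core_sub).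
Qed.

Lemma connect_induced_image x b : connect (induced eU (i @: core k n e P)) (i x) b ->
  exists2 y, b = i y & connect (induced e (core k n e P)) x y.
Proof.
move/connectP => [p]; elim: p x => [|c p IH] x /=; first by move=> _ ->; exists x.
move=> /andP [xc Hp] Hb.
case/and3P: (xc) => _ _ /eU_range [_ [y Ey]]; subst c.
have [z -> Hz] := IH y Hp Hb; exists z => //.
by apply: connect_trans (connect1 _) Hz; rewrite -induced_image.
Qed.

Lemma linked_image x y : linked k n eU (map i P) (i x) (i y) = linked k n e P x y.
Proof.
rewrite /linked core_image; apply/idP/idP; first by move/connect_induced_image => [z /i_inj ->].
move/connectP => [p]; elim: p x => [|c p IH] x /=; first by move=> _ ->; exact: connect0.
move=> /andP [xc Hp] Hy; apply: connect_trans (connect1 _) (IH c Hp Hy).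
by rewrite induced_image.
Qed.

Lemma anchors_image y : anchors k n eU (map i P) (i y) = i @: anchors k n e P y.
Proof.
apply/setP => a; rewrite inE; apply/andP/imsetP.
  by move=> [/mapP [x xP ->]]; rewrite linked_image => H; exists x; rewrite // inE xP.
move=> [x]; rewrite inE => /andP [xP H] ->.
by rewrite map_f // linked_image.
Qed.

Lemma settled_image y : settled k n eU (map i P) (i y) = settled k n e P y.
Proof.
rewrite /settled anchors_image card_imset // ball_image ?mem_imset //.
  by apply/subsetP => u; rewrite !inE => /andP [].
by rewrite /locality; apply: leq_trans (leq_subr _ _) (leq_addr _ _).
Qed.

Definition unimage (a : U) : option V := [pick x | i x == a].

Lemma unimageK x : unimage (i x) = Some x.
Proof.
by rewrite /unimage; case: pickP => [y /eqP /i_inj -> //|/(_ x)]; rewrite eqxx.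
Qed.

Lemma online_invariant_image o :
  online_invariant k l n e P o -> online_invariant k l n eU (map i P) o.
Proof.
move=> [f [Hm Hr Hp Hf]].
pose fU a := if unimage a is Some x then f x else 0.
have fUi x : fU (i x) = f x by rewrite /fU unimageK.
exists fU; split.
- by rewrite -map_comp -Hm; apply: eq_map => x /=; rewrite fUi.
- by move=> a; rewrite core_image => /imsetP [x xC ->]; rewrite fUi; apply: Hr.
- move=> a b; rewrite core_image => /imsetP [x xC ->] /imsetP [y yC ->].
  by rewrite eU_image => /and3P [_ _ exy]; rewrite !fUi; exact: Hp.
- move=> a; rewrite core_image => /imsetP [x xC ->].
  have [s [chi [Hchi Hs]]] := Hf x xC.
  pose chiU a := if unimage a is Some x then chi x else Ordinal k_gt0.
  have chiUi z : chiU (i z) = chi z by rewrite /chiU unimageK.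
  exists s, chiU; split.
    move=> a' b'; rewrite visible_image => /imsetP [x' Hx' ->] /imsetP [y' Hy' ->].
    by rewrite eU_image => /and3P [_ _ exy]; rewrite !chiUi; exact: Hchi.
  move=> b xb; have := xb; rewrite /linked core_image => /connect_induced_image [y -> xy].
  by rewrite settled_image fUi chiUi; exact: Hs.
Qed.

Lemma online_invariant_preimage o :
  online_invariant k l n eU (map i P) o -> online_invariant k l n e P o.
Proof.
move=> [fU [Hm Hr Hp Hf]]; exists (fun x => fU (i x)); split.
- by rewrite -Hm -map_comp.
- by move=> x xC; apply: Hr; rewrite core_image mem_imset.
- move=> x y xC yC exy; apply: Hp; rewrite ?core_image ?mem_imset //.
  by rewrite eU_image exy !(subsetP core_sub).
- move=> x xC; have xC' : i x \in core k n eU (map i P) by rewrite core_image mem_imset.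
  have [s [chiU [Hchi Hs]]] := Hf (i x) xC'.
  exists s, (fun x => chiU (i x)); split.
    move=> x' y' Hx' Hy' exy; apply: Hchi; rewrite ?visible_image ?mem_imset //.
    by rewrite eU_image exy !(subsetP visible_sub).
  by move=> y xy Hc; apply: Hs; rewrite ?linked_image ?settled_image.
Qed.

End Image.

Section Extend.
Variables (V : finType) (e : rel V) (k l : nat).
Hypothesis esym : symmetric e.
Hypothesis L : L_class e k l.

Lemma online_invariant_nil : online_invariant k l #|V| e [::] [::].
Proof.
by exists (fun _ => 0); split=> // [x|x y|x] /ballP [u]; rewrite inE.
Qed.

Lemma online_invariant_extend (P : seq V) v o : v \notin P ->
  online_invariant k l #|V| e P o ->
  exists c, online_invariant k l #|V| e (rcons P v) (rcons o c).
Proof.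
move=> vP [f [Hm Hr Hp Hf]]; have [[cs cs_proper] Luniq] := L.
pose ch (s0 s1 : {perm 'I_k}) :=
  epsilon (inhabits (fun _ _ => 0)) (fun F => frame_chain F s0 s1 (3 * k)).
have ch_chain s0 s1 : frame_chain (ch s0 s1) s0 s1 (3 * k).
  exact: epsilon_spec (exists_frame_chain s0 s1).
pose is_frame x (s : {perm 'I_k}) := forall y, linked k #|V| e P x y ->
  settled k #|V| e P y -> f y = (s (cs y)).+1.
pose frames x := epsilon (inhabits 1%g) (is_frame x).
have frames_spec x : x \in core k #|V| e P -> is_frame x (frames x).
  move=> xC; have [s [chi [Hchi Hs]]] := Hf x xC.
  exact: epsilon_spec (global_frame esym cs_proper Luniq xC Hchi Hs).
by eexists; exact: (online_invariant_rcons l esym cs_proper ch_chain vP Hr Hp frames_spec Hm).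
Qed.

End Extend.

Definition choose_nat (Q : nat -> Prop) : nat := epsilon (inhabits 0) Q.

Fixpoint choice_seq (Q : nat -> seq nat -> nat -> Prop) (j : nat) : seq nat :=
  if j is j'.+1 then rcons (choice_seq Q j') (choose_nat (Q j (choice_seq Q j')))
  else [::].

Lemma size_choice_seq Q j : size (choice_seq Q j) = j.
Proof. by elim: j => //= j IH; rewrite size_rcons IH. Qed.

Lemma take_choice_seq Q m j : j <= m -> take j (choice_seq Q m) = choice_seq Q j.
Proof.
elim: m => [|m IH]; first by rewrite leqn0 => /eqP ->.
rewrite leq_eqVlt => /orP [/eqP ->|]; first by rewrite take_oversize // size_choice_seq.
by rewrite ltnS => jm /=; rewrite -cats1 takel_cat ?size_choice_seq // IH.
Qed.

Lemma nth_choice_seq Q m j : j < m -> nth 0 (choice_seq Q m) j = last 0 (choice_seq Q j.+1).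
Proof.
move=> jm; rewrite -(nth_take 0 (ltnSn j)) take_choice_seq //=.
by rewrite nth_rcons size_choice_seq ltnn eqxx last_rcons.
Qed.

Lemma eq_choice_seq Q Q' m : (forall j, j <= m -> Q j = Q' j) ->
  choice_seq Q m = choice_seq Q' m.
Proof.
elim: m => //= m IH H; rewrite IH => [|j jm]; last exact/H/leqW.
by rewrite H.
Qed.

(* The visible graph is read, through the identifiers, as a graph on ['I_(n ^ d).+1]. *)
Definition online_coloring_alg (k l d : nat) : online_alg := fun n ids _ adj =>
  let eU : rel 'I_(n ^ d).+1 := fun a b => adj a b in
  let PU := map (fun a => inord a : 'I_(n ^ d).+1) ids in
  last 0 (choice_seq
    (fun j o c => online_invariant k l n eU (take j PU) (rcons o c)) (size ids)).

Section Main.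
Variables (k l d : nat).
Hypothesis k_gt0 : 0 < k.
Variables (V : finType) (e : rel V) (id : V -> nat) (sigma : seq V).
Hypothesis esym : symmetric e.
Hypothesis id_inj : injective id.
Hypothesis id_bound : forall x, 1 <= id x <= #|V| ^ d.
Let n := #|V|.
Let label x : 'I_(n ^ d).+1 := inord (id x).

Lemma label_val x : label x = id x :> nat.
Proof. by rewrite /label inordK // ltnS; case/andP: (id_bound x). Qed.

Lemma label_inj : injective label.
Proof. by move=> x y E; apply: id_inj; rewrite -!label_val E. Qed.

Definition prefix_invariant j o c := online_invariant k l n e (take j sigma) (rcons o c).

Lemma online_output_choice_seq i : i <= size sigma ->
  online_output (online_coloring_alg k l d) (locality k l) e id sigma i =
  last 0 (choice_seq prefix_invariant i).
Proof.
move=> isz; rewrite /online_output /online_coloring_alg size_map size_take.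
rewrite (_ : (if i < size sigma then i else size sigma) = i); last by case: ltnP => //; lia.
congr last; apply: eq_choice_seq => j ji.
apply: functional_extensionality => o; apply: functional_extensionality => c.
set W := ball e (locality k l n) [set x in take i sigma].
set eU := fun a b : 'I_(n ^ d).+1 => _.
have -> : take j (map (fun a => inord a : 'I_(n ^ d).+1) (map id (take i sigma))) =
  map label (take j sigma) by rewrite -map_comp -map_take take_takel.
have eU_image x y : eU (label x) (label y) = [&& x \in W, y \in W & e x y].
  rewrite /eU !label_val; apply/existsP/idP.
    move=> [x' /andP [x'W /existsP [y' /andP [y'W /and3P [/eqP /id_inj E1 /eqP /id_inj E2 exy]]]]].
    by subst; rewrite x'W y'W exy.
  move=> /and3P [xW yW exy]; exists x; rewrite xW /=; apply/existsP; exists y.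
  by rewrite yW !eqxx exy.
have eU_range a b : eU a b -> (exists x, a = label x) /\ (exists y, b = label y).
  move=> /existsP [x /andP [_ /existsP [y /andP [_ /and3P [/eqP Ex /eqP Ey _]]]]].
  by split; [exists x | exists y]; apply: ord_inj; rewrite label_val.
have sub : visible k l n e (take j sigma) \subset W.
  apply/subsetP => x; apply: ball_le => //; apply/subsetP => u; rewrite !inE.
  by rewrite -(cat_take_drop j (take i sigma)) mem_cat take_takel // => ->.
apply: propositional_extensionality; split.
  exact: (online_invariant_preimage label_inj eU_image eU_range sub).
exact: (online_invariant_image k_gt0 label_inj eU_image eU_range sub).
Qed.

Hypothesis L : L_class e k l.
Hypothesis sigma_perm : perm_eq sigma (enum V).

Lemma online_invariant_choice_seq j : j <= size sigma ->
  online_invariant k l n e (take j sigma) (choice_seq prefix_invariant j).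
Proof.
elim: j => [|j IH] Hj; first by rewrite take0; exact: online_invariant_nil.
have x0 : V by move: Hj; case: (sigma) => // x0.
have sigmaE := cat_take_drop j.+1 sigma; rewrite (take_nth x0 Hj) in sigmaE.
have vP : nth x0 sigma j \notin take j sigma.
  have : uniq sigma by rewrite (perm_uniq sigma_perm) enum_uniq.
  by rewrite -{1}sigmaE cat_uniq rcons_uniq => /andP [/andP []].
have [c Hc] := online_invariant_extend esym L vP (IH (ltnW Hj)).
apply: (epsilon_spec (inhabits 0) (prefix_invariant j.+1 _)).
by exists c; rewrite /prefix_invariant (take_nth x0 Hj).
Qed.

Local Notation col := (online_coloring (online_coloring_alg k l d) (locality k l) e id sigma).

Lemma online_coloring_alg_correct :
  (forall v, 1 <= col v <= k.+1) /\ (forall u v, e u v -> col u != col v).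
Proof.
have := online_invariant_choice_seq (leqnn _); rewrite take_size => [[f [Hm Hr Hp _]]].
have in_sigma v : v \in sigma by rewrite (perm_mem sigma_perm) mem_enum.
have in_core v : v \in core k n e sigma by apply: (subsetP (sub_ball _ _ _)); rewrite inE.
have colE v : col v = f v.
  have iv : index v sigma < size sigma by rewrite index_mem.
  rewrite /online_coloring online_output_choice_seq // -(nth_choice_seq _ iv) -Hm.
  by rewrite (nth_map v) ?nth_index.
by split=> [v|u v euv]; rewrite !colE; [exact: Hr | exact: Hp].
Qed.

End Main.

Lemma online_coloring_alg_solves k l d : 0 < k ->
  solves_online (online_coloring_alg k l d) (locality k l) k l d.
Proof.
move=> k_gt0 V e id sigma [esym _] _ L id_inj id_bound sigma_perm.
exact: online_coloring_alg_correct.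
Qed.

Lemma locality_is_O_log k l : is_O_log (locality k l).
Proof.
exists (3 * k + 2 + l), 2 => n n_ge2.
have := leq_trunc_log 2 n_ge2; rewrite (@trunc_log_eq 2 1 2) //.
rewrite /locality /core_radius; nia.
Qed.

Theorem theorem4 :
  forall k l : nat, 2 <= k ->
  forall d : nat,
  exists (T : nat -> nat) (A : online_alg),
    is_O_log T /\ solves_online A T k l d.
Proof.
move=> k l k_ge2 d; exists (locality k l), (online_coloring_alg k l d).
by split; [exact: locality_is_O_log | apply: online_coloring_alg_solves; lia].
Qed.
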